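(* (a) Let $(F[n])_{n\in\mathbb N_0}$ with coface operators $F(\delta^k)\colon F[n-1]\to F[n]$ ($k=0,\dots,n$, $n\in\mathbb N$) be an SCO in a category $\mathcal C$. Consider the filtration $F[0]\xrightarrow{i_1}F[1]\xrightarrow{i_2}\cdots$ with $i_n:=F(\delta^n)$, and suppose it has an $\omega$-colimit $F_\infty$ with canonical morphisms $\mu_n\colon F[n]\to F_\infty$. For $n\in\mathbb N$, $k\in\mathbb N_0$ set $\alpha_k^{(n)}:=F(\delta^k)\colon F[n-1]\to F[n]$ if $k\le n$ and $\alpha_k^{(n)}:=F(\delta^n)$ if $k>n$. Then for each $k$ the family $(\alpha_k^{(n)})_{n\in\mathbb N}$ determines an adapted endomorphism $\alpha_k$ of $F_\infty$ (i.e. $\mu_{n+1}\alpha_k^{(n+1)}i_n=\mu_n\alpha_k^{(n)}$ for all $n$, and $\alpha_k$ is the unique morphism with $\alpha_k\mu_{n-1}=\mu_n\alpha_k^{(n)}$ for all $n$), and $(\alpha_k)_{k\in\mathbb N_0}$ is an SCO-system of partial shifts for this filtration (called the SCO-system canonically associated to the SCO). (b) Conversely, let $(\alpha_k)_{k\in\mathbb N_0}$ be an SCO-system of partial shifts for a filtration $(F_n,i_n)$ with $\omega$-colimit $F_\infty$ whose canonical morphisms $\mu_n\colon F_n\to F_\infty$ are all monic, with $\alpha_k$ determined by $(\alpha_k^{(n)})_{n\in\mathbb N}$. Then $F[n]:=F_n$ together with $F(\delta^k):=\alpha_k^{(n)}\colon F[n-1]\to F[n]$ for $k=0,\dots,n$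 is an SCO in $\mathcal C$, and $(\alpha_k)_{k\in\mathbb N_0}$ is the SCO-system of partial shifts canonically associated (as in (a)) to this SCO.
   Context: A semi-cosimplicial object (SCO) in a category $\mathcal C$ is a sequence $(F^n)_{n\in\mathbb N_0}$ of objects with morphisms (coface operators) $\delta^k\colon F^{n-1}\to F^n$ ($k=0,\dots,n$, $n\in\mathbb N$) satisfying the cosimplicial identities $\delta^j\delta^i=\delta^i\delta^{j-1}$ whenever $i<j$. A filtration is a sequence of objects $F_n$ ($n\in\mathbb N_0$) with morphisms $i_n\colon F_{n-1}\to F_n$; its $\omega$-colimit is $F_\infty$ with $\mu_n\colon F_n\to F_\infty$, $\mu_ni_n=\mu_{n-1}$, universal among such cones. A morphism $\alpha\colon F_\infty\to F_\infty$ is an adapted endomorphism determined by $\alpha^{(n)}\colon F_{n-1}\to F_n$ ($n\in\mathbb N$) if $\mu_{n+1}\alpha^{(n+1)}i_n=\mu_n\alpha^{(n)}$ and $\alpha\mu_{n-1}=\mu_n\alpha^{(n)}$ for all $n$. A sequence $(\alpha_k)_{k\in\mathbb N_0}$ of adapted endomorphisms for a common filtration is an SCO-system of partial shifts if (1) $\alpha_k\mu_{k-1}=\mu_{k-1}$ for each $k\in\mathbb N$, and (2) $\alpha_j\alpha_i=\alpha_i\alpha_{j-1}$ for all $i<j$ in $\mathbb N_0$. *)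

From Stdlib Require Import Arith.
Set Implicit Arguments.
Unset Strict Implicit.

Record Category := {
  Ob :> Type;
  Hom : Ob -> Ob -> Type;
  comp : forall a b c : Ob, Hom b c -> Hom a b -> Hom a c;
  idm : forall a : Ob, Hom a a;
  comp_assoc : forall a b c d (h : Hom c d) (g : Hom b c) (f : Hom a b),
      comp h (comp g f) = comp (comp h g) f;
  comp_id_l : forall a b (f : Hom a b), comp (idm b) f = f;
  comp_id_r : forall a b (f : Hom a b), comp f (idm a) = f
}.

Arguments comp {c a b c0} _ _ : rename.
Arguments Hom : clear implicits.
Arguments idm {c0} a : rename.
Notation "g \o f" := (comp g f) (at level 40, left associativity).

Section Defs.
Variable C : Category.

Definition monic (a b : C) (f : Hom C a b) : Prop :=
  forall (x : C) (g h : Hom C x a), f \o g = f \o h -> g = h.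

(* INDEXING CONVENTION (shift by one): [delta n k : F n -> F (S n)] is the
   paper's coface F(delta^k) : F[n] -> F[n+1] (paper index n+1), meaningful
   for k <= n+1. *)
Definition is_SCO (F : nat -> C) (delta : forall n : nat, nat -> Hom C (F n) (F (S n)))
  : Prop :=
  forall n i j, i < j -> j <= S (S n) ->
    delta (S n) j \o delta n i = delta (S n) i \o delta n (j - 1).

(* A filtration is (Fn, i) with [i n : Fn n -> Fn (S n)] the paper's i_{n+1}.
   omega-colimit (Finf, mu): a universal cocone. *)
Definition is_omega_colimit (Fn : nat -> C) (i : forall n, Hom C (Fn n) (Fn (S n)))
  (Finf : C) (mu : forall n, Hom C (Fn n) Finf) : Prop :=
  (forall n, mu (S n) \o i n = mu n) /\
  (forall (X : C) (c : forall n, Hom C (Fn n) X),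
      (forall n, c (S n) \o i n = c n) ->
      exists u : Hom C Finf X,
        (forall n, u \o mu n = c n) /\
        (forall v : Hom C Finf X, (forall n, v \o mu n = c n) -> v = u)).

(* [a n : Fn n -> Fn (S n)] is the paper's alpha^{(n+1)}.
   alpha is the adapted endomorphism determined by a. *)
Definition adapted (Fn : nat -> C) (i : forall n, Hom C (Fn n) (Fn (S n)))
  (Finf : C) (mu : forall n, Hom C (Fn n) Finf)
  (alpha : Hom C Finf Finf) (a : forall n, Hom C (Fn n) (Fn (S n))) : Prop :=
  (forall n, mu (S (S n)) \o a (S n) \o i n = mu (S n) \o a n) /\
  (forall n, alpha \o mu n = mu (S n) \o a n).

Definition is_SCO_system (Fn : nat -> C) (i : forall n, Hom C (Fn n) (Fn (S n)))
  (Finf : C) (mu : forall n, Hom C (Fn n) Finf) (alpha : nat -> Hom C Finf Finf)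
  : Prop :=
  (forall k, exists a, adapted i mu (alpha k) a) /\
  (forall k, alpha (S k) \o mu k = mu k) /\
  (forall i0 j, i0 < j -> alpha j \o alpha i0 = alpha i0 \o alpha (j - 1)).

(* The canonical families of part (a): [canon_alpha delta k n] is the paper's
   alpha_k^{(n+1)} = F(delta^k) if k <= n+1, and F(delta^{n+1}) otherwise. *)
Definition canon_alpha (F : nat -> C) (delta : forall n : nat, nat -> Hom C (F n) (F (S n)))
  (k n : nat) : Hom C (F n) (F (S n)) :=
  if k <=? S n then delta n k else delta n (S n).

End Defs.

(* An adapted endomorphism
   [alpha] with components [a] satisfies [alpha \o mu n = mu (S n) \o a n], so a
   composite of two shifts restricted to stage [n] is [mu (S (S n))] after the
   composite of components.  As the [mu n] are jointly epic, identities between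
   components give identities between shifts, and conversely when the [mu n] are
   monic.  Condition (1) propagates along the filtration to
   [alpha k \o mu n = mu n] for all [n < k]: beyond its stage a shift acts as the
   inclusion [i n], which is exactly how the canonical shifts are defined there. *)
From Stdlib Require Import Arith Lia ClassicalEpsilon.
Set Implicit Arguments.
Unset Strict Implicit.

Section OmegaColimit.
Variable C : Category.
Variables (Fn : nat -> C) (i : forall n, Hom C (Fn n) (Fn (S n))).
Variables (Finf : C) (mu : forall n, Hom C (Fn n) Finf).
Hypothesis colim : is_omega_colimit i mu.

Lemma colimit_hom_ext (X : C) (f g : Hom C Finf X) :
  (forall n, f \o mu n = g \o mu n) -> f = g.
Proof.
  intros E. destruct colim as [Hcoc Huniv].
  destruct (Huniv X (fun n => g \o mu n)) as [u [_ Hu]].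
  - intro n. rewrite <- comp_assoc, Hcoc. reflexivity.
  - rewrite (Hu f E), (Hu g (fun n => eq_refl)). reflexivity.
Qed.

Lemma adapted_exists (a : forall n, Hom C (Fn n) (Fn (S n))) :
  (forall n, mu (S (S n)) \o a (S n) \o i n = mu (S n) \o a n) ->
  { alpha : Hom C Finf Finf | adapted i mu alpha a }.
Proof.
  intros Ha. apply constructive_indefinite_description.
  destruct colim as [_ Huniv].
  destruct (Huniv Finf (fun n => mu (S n) \o a n)) as [u [Hu _]]; [exact Ha|].
  exists u. split; assumption.
Qed.

Lemma cocone_of_commuting (a : forall n, Hom C (Fn n) (Fn (S n))) :
  (forall n, a (S n) \o i n = i (S n) \o a n) ->
  forall n, mu (S (S n)) \o a (S n) \o i n = mu (S n) \o a n.
Proof.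
  intros Ha n. destruct colim as [Hcoc _].
  rewrite <- comp_assoc, Ha, comp_assoc, Hcoc. reflexivity.
Qed.

Lemma adapted_comp (alpha beta : Hom C Finf Finf) (a b : forall n, Hom C (Fn n) (Fn (S n))) :
  adapted i mu alpha a -> adapted i mu beta b ->
  forall n, beta \o alpha \o mu n = mu (S (S n)) \o b (S n) \o a n.
Proof.
  intros [_ Ha] [_ Hb] n.
  rewrite <- comp_assoc, Ha, comp_assoc, Hb. reflexivity.
Qed.

Lemma shift_fixes_lower (alpha : nat -> Hom C Finf Finf) :
  (forall k, alpha (S k) \o mu k = mu k) ->
  forall n k, n < k -> alpha k \o mu n = mu n.
Proof.
  intros Hfix n k Hnk. destruct colim as [Hcoc _].
  replace k with (S (k - S n + n)) by lia.
  generalize (k - S n) as d. clear k Hnk. intro d. revert n. induction d as [|d IH]; intro n; [apply Hfix|].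
  rewrite <- (Hcoc n), comp_assoc.
  replace (S (S d + n)) with (S (d + S n)) by lia.
  rewrite IH. reflexivity.
Qed.

Lemma adapted_component_eq (alpha : Hom C Finf Finf) (a : forall n, Hom C (Fn n) (Fn (S n)))
    n (f : Hom C (Fn n) (Fn (S n))) :
  monic (mu (S n)) -> adapted i mu alpha a -> alpha \o mu n = mu (S n) \o f -> a n = f.
Proof.
  intros Hmono [_ Ha] Hf. apply Hmono. rewrite <- Ha. exact Hf.
Qed.

Section SCOSystem.
Hypothesis mu_monic : forall n, monic (mu n).
Variables (alpha : nat -> Hom C Finf Finf) (a : nat -> forall n, Hom C (Fn n) (Fn (S n))).
Hypothesis alpha_adapted : forall k, adapted i mu (alpha k) (a k).
Hypothesis alpha_fix : forall k, alpha (S k) \o mu k = mu k.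
Hypothesis alpha_cosimplicial :
  forall i0 j, i0 < j -> alpha j \o alpha i0 = alpha i0 \o alpha (j - 1).

Lemma shift_component_inclusion k n : n < k -> a k n = i n.
Proof.
  intros Hnk.
  apply (adapted_component_eq (alpha := alpha k)); [apply mu_monic | apply alpha_adapted |].
  rewrite shift_fixes_lower by assumption.
  destruct colim as [Hcoc _]. symmetry. apply Hcoc.
Qed.

Lemma SCO_system_is_SCO : is_SCO (fun n k => a k n).
Proof.
  intros n i0 j Hij _. apply (@mu_monic (S (S n))). cbn.
  rewrite !comp_assoc, <- !(adapted_comp (alpha_adapted _) (alpha_adapted _)).
  apply f_equal2; [|reflexivity]. apply alpha_cosimplicial, Hij.
Qed.

End SCOSystem.

End OmegaColimit.

Section CanonicalFamilies.
Variable C : Category.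
Variables (F : nat -> C) (delta : forall n : nat, nat -> Hom C (F n) (F (S n))).

Lemma canon_alpha_top n : canon_alpha delta (S n) n = delta n (S n).
Proof. unfold canon_alpha. rewrite Nat.leb_refl. reflexivity. Qed.

Lemma canon_alpha_eq k n :
  (S n < k -> delta n k = delta n (S n)) -> canon_alpha delta k n = delta n k.
Proof.
  intros Hk. unfold canon_alpha.
  destruct (Nat.leb_spec k (S n)); [reflexivity|]. symmetry. apply Hk. assumption.
Qed.

Hypothesis delta_SCO : is_SCO delta.

Lemma canon_alpha_commutes k n :
  canon_alpha delta k (S n) \o delta n (S n) = delta (S n) (S (S n)) \o canon_alpha delta k n.
Proof.
  unfold canon_alpha.
  destruct (Nat.leb_spec k (S n)); destruct (Nat.leb_spec k (S (S n))); try lia.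
  - symmetry. apply delta_SCO; lia.
  - replace k with (S (S n)) by lia. reflexivity.
  - reflexivity.
Qed.

Lemma canon_alpha_cosimplicial i j n : i < j ->
  canon_alpha delta j (S n) \o canon_alpha delta i n
  = canon_alpha delta i (S n) \o canon_alpha delta (j - 1) n.
Proof.
  intros Hij. unfold canon_alpha.
  destruct (Nat.leb_spec j (S (S n))), (Nat.leb_spec i (S n)),
    (Nat.leb_spec i (S (S n))), (Nat.leb_spec (j - 1) (S n)); try lia.
  - apply delta_SCO; lia.
  - exact (delta_SCO (n := n) (i := i) (j := S (S n)) ltac:(lia) ltac:(lia)).
  - replace i with (S (S n)) by lia. reflexivity.
  - reflexivity.
Qed.

End CanonicalFamilies.

Theorem mainTheorem3 (C : Category) :
  (* (a) *)
  (forall (F : nat -> C) (delta : forall n : nat, nat -> Hom C (F n) (F (S n)))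
          (Finf : C) (mu : forall n, Hom C (F n) Finf),
      is_SCO delta ->
      is_omega_colimit (fun n => delta n (S n)) mu ->
      exists alpha : nat -> Hom C Finf Finf,
        (forall k, adapted (fun n => delta n (S n)) mu (alpha k) (canon_alpha delta k)) /\
        (forall k (beta : Hom C Finf Finf),
            (forall n, beta \o mu n = mu (S n) \o canon_alpha delta k n) ->
            beta = alpha k) /\
        is_SCO_system (fun n => delta n (S n)) mu alpha)
  /\
  (* (b) *)
  (forall (Fn : nat -> C) (i : forall n, Hom C (Fn n) (Fn (S n)))
          (Finf : C) (mu : forall n, Hom C (Fn n) Finf)
          (alpha : nat -> Hom C Finf Finf)
          (a : nat -> forall n, Hom C (Fn n) (Fn (S n))),
      is_omega_colimit i mu ->
      (forall n, monic (mu n)) ->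
      (forall k, adapted i mu (alpha k) (a k)) ->
      is_SCO_system i mu alpha ->
      is_SCO (fun n k => a k n) /\
      (forall n, i n = a (S n) n) /\
      (forall k n, a k n = canon_alpha (fun n k => a k n) k n)).
Proof.
  split.
  - intros F delta Finf mu HS HC.
    assert (Hex : forall k,
        {alpha | adapted (fun n => delta n (S n)) mu alpha (canon_alpha delta k)}).
    { intro k. apply (adapted_exists HC), (cocone_of_commuting HC), canon_alpha_commutes, HS. }
    set (alpha k := proj1_sig (Hex k)).
    assert (Hadapt : forall k, adapted (fun n => delta n (S n)) mu (alpha k) (canon_alpha delta k))
      by (intro k; exact (proj2_sig (Hex k))).
    exists alpha. split; [exact Hadapt|]. split; [|split; [|split]].
    + intros k beta Hbeta. apply (colimit_hom_ext HC). intro n.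
      rewrite Hbeta. symmetry. apply (proj2 (Hadapt k)).
    + intro k. exists (canon_alpha delta k). apply Hadapt.
    + intro k. rewrite (proj2 (Hadapt (S k))), canon_alpha_top. apply (proj1 HC).
    + intros i j Hij. apply (colimit_hom_ext HC). intro n.
      rewrite (adapted_comp (Hadapt i) (Hadapt j)), (adapted_comp (Hadapt (j - 1)) (Hadapt i)).
      rewrite <- !comp_assoc, (canon_alpha_cosimplicial HS n Hij). reflexivity.
  - intros Fn i Finf mu alpha a HC Hmono Hadapt [_ [Hfix Hcos]].
    pose proof (shift_component_inclusion HC Hmono Hadapt Hfix) as Hincl.
    split; [exact (SCO_system_is_SCO Hmono Hadapt Hcos)|]. split.
    + intro n. symmetry. apply Hincl. lia.
    + intros k n. symmetry. apply canon_alpha_eq. intro Hk. cbn.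
      rewrite !Hincl by lia. reflexivity.
Qed.
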